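(* Fix any $d,r\in\mathbb{N}$. For every $m\in\mathbb{N}$ there exists $m'=m'(d,r,m)$ such that every graph $G$ with $(r,m')$-rank more than $d$ contains $T_{d,m}$ as an $r$-shallow topological minor.
   Context: $T_{d,m}$ is the rooted tree of depth $d$ (all leaf-to-root paths have $d$ edges) in which every non-leaf vertex has exactly $m$ children. $H$ is an $r$-shallow topological minor of $G$ if $G$ has a subgraph isomorphic to a graph obtained from $H$ by replacing each edge by a path with at most $r$ internal vertices (paths internally disjoint). $N_r^G(v)$ is the closed $r$-neighborhood of $v$; $G-S$ is the subgraph induced on $V(G)\setminus S$. The $(r,m)$-rank of vertices of $G$ (values in $\mathbb{N}\cup\{\infty\}$, with $\infty$ larger than every integer) is defined by: initially every vertex has rank $\infty$; in rounds $i=1,2,\dots$, every vertex $v$ currently of rank $\infty$ receives rank $i$ if there exists $S\subseteq V(G)\setminus\{v\}$ with $|S|\le m$ such that every vertex of $N_r^{G-S}(v)\setminus\{v\}$ received a finite rank in rounds $1,\dots,i-1$; the procedure stops when all ranks are finite or a round assigns no new rank. The $(r,m)$-rank of $G$ is the maximum $(r,m)$-rank of a vertex of $G$. *)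

(* Finite simple graphs are given as a finType V with a
   symmetric irreflexive boolean relation e. *)
From mathcomp Require Import all_boot.
Set Implicit Arguments. Unset Strict Implicit. Unset Printing Implicit Defensive.

Section Graphs.
Variables (V : finType) (e : rel V).

(* [ballS S v k] = closed k-neighbourhood of v in G - S (empty if v \in S). *)
Fixpoint ballS (S : {set V}) (v : V) (k : nat) : {set V} :=
  match k with
  | 0 => if v \in S then set0 else [set v]
  | k'.+1 => let B := ballS S v k' in
             B :|: [set w | (w \notin S) && [exists u in B, e u w]]
  end.

(* [ranked r m k] = set of vertices whose (r,m)-rank is finite and <= k,
   i.e. which received a rank in one of the rounds 1..k. *)
Fixpoint ranked (r m : nat) (k : nat) : {set V} :=
  match k with
  | 0 => set0
  | k'.+1 => let R := ranked r m k' in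
      R :|: [set v | [exists S : {set V},
                [&& #|S| <= m, v \notin S & (ballS S v r :\ v) \subset R]]]
  end.

(* The (r,m)-rank of G is more than d: some vertex has rank > d (possibly oo). *)
Definition rank_gt (r m d : nat) : Prop := exists v : V, v \notin ranked r m d.

End Graphs.

(* H is an r-shallow topological minor of G: branch vertices phi, and for each
   edge xy of H a path phi x - P x y - phi y in G with at most r internal
   vertices, internal vertices distinct and outside the branch set, and paths
   of different edges internally disjoint. *)
Definition shallow_topminor (VH : finType) (eH : rel VH)
    (VG : finType) (eG : rel VG) (r : nat) : Prop :=
  exists (phi : VH -> VG) (P : VH -> VH -> seq VG),
    [/\ injective phi,
        (forall x y, eH x y ->
           [/\ path eG (phi x) (rcons (P x y) (phi y)),
               size (P x y) <= r,
               uniq (P x y) &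
               forall z u, z \in P x y -> z != phi u]) &
        (forall x y x' y', eH x y -> eH x' y' ->
           ~~ (((x == x') && (y == y')) || ((x == y') && (y == x'))) ->
           forall z, z \in P x y -> z \notin P x' y')].

(* The rooted tree T_{d,m}: vertices are words over 'I_m of length <= d
   (the root is the empty word); a word's children are its one-letter
   extensions. *)
Definition tree_vertex (d m : nat) := {k : 'I_d.+1 & k.-tuple 'I_m}.

Definition tree_parent (d m : nat) (x y : tree_vertex d m) : bool :=
  ((tag y : nat) == (tag x).+1) && (val (tagged x) == take (tag x) (val (tagged y))).

Definition tree_edge (d m : nat) : rel (tree_vertex d m) :=
  fun x y => tree_parent x y || tree_parent y x.

From mathcomp Require Import all_boot zify.
Set Implicit Arguments. Unset Strict Implicit. Unset Printing Implicit Defensive.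

(* Take m' = (r+1) |T_{d,m}| and embed T_{d,m} greedily, node by node, starting
   from a vertex of rank > d, so that a node at depth k is sent to a vertex of
   rank > d - k. To attach a new child to a node embedded at v, delete every
   other vertex used so far; these are at most m'. Because v has rank > d - k,
   its r-ball in what remains contains a vertex u of rank > d - k - 1, and a
   shortest path from v to u has fewer than r internal vertices, all unused. *)

Lemma flatten_map_disjoint (T U : eqType) (f : T -> seq U) s x y z :
  uniq (flatten (map f s)) -> x \in s -> y \in s -> x != y ->
  z \in f x -> z \notin f y.
Proof.
elim: s => //= a s IH; rewrite cat_uniq => /and3P [_ /hasPn disj uf].
have mem_flat b : b \in s -> z \in f b -> z \in flatten (map f s).
  by move=> bs zb; apply/flatten_mapP; exists b.
rewrite !inE => /predU1P [-> | xs] /predU1P [-> | ys]; rewrite ?eqxx //.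
- by move=> _ zx; apply/negP => /(mem_flat _ ys)/disj; rewrite zx.
- by move=> _ zx; exact: disj (mem_flat _ xs zx).
- exact: IH.
Qed.

Lemma flatten_map_uniq (T U : eqType) (f : T -> seq U) s x :
  uniq (flatten (map f s)) -> x \in s -> uniq (f x).
Proof.
elim: s => //= a s IH; rewrite cat_uniq => /and3P [ua _ uf].
by rewrite inE => /predU1P [-> // | /IH ->].
Qed.

Lemma size_flatten_map_le (T : eqType) (U : Type) (f : T -> seq U) s n :
  {in s, forall x, size (f x) <= n} -> size (flatten (map f s)) <= n * size s.
Proof.
elim: s => //= a s IH fs; rewrite size_cat mulnS leq_add ?fs ?mem_head //.
by apply: IH => x xs; apply: fs; rewrite inE xs orbT.
Qed.

Section Balls.
Variables (V : finType) (e : rel V).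

Lemma ballS_walk S v k u : u \in ballS e S v k ->
  exists p, [/\ path e v p, last v p = u, size p <= k & all [predC S] (v :: p)].
Proof.
elim: k u => [|k IH] u /=.
  case: ifP => vS; first by rewrite inE.
  by rewrite inE => /eqP ->; exists [::].
rewrite in_setU => /orP [/IH [p [ep lp sp Sp]] | ].
  by exists p; rewrite ep lp leqW.
rewrite inE => /andP [uS /existsP [x /andP [/IH [p [ep lp sp Sp]] exu]]].
exists (rcons p u); rewrite rcons_path ep lp exu last_rcons size_rcons ltnS sp.
by move: Sp => /= /andP [-> Sp]; rewrite all_rcons inE uS Sp.
Qed.

Lemma ballS_path S v k u : u \in ballS e S v k -> u != v ->
  exists q, [/\ path e v (rcons q u), size q < k, uniq (v :: rcons q u)
              & {in rcons q u, forall x, x \notin S}].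
Proof.
move=> /ballS_walk [p [ep lp sp Sp]] uv; move: lp.
case: (shortenP ep) => p' ep' up' sub_p'.
case/lastP: p' ep' up' sub_p' => [|q y] ep' up' sub_p'.
  by move=> /= uv'; rewrite uv' eqxx in uv.
rewrite last_rcons => <-; exists q; split => //.
- by rewrite -(size_rcons q y) (leq_trans (uniq_leq_size (andP up').2 sub_p') sp).
- by move=> x /sub_p' xp; move/allP: Sp; apply; rewrite inE xp orbT.
Qed.

Lemma unranked_ball_vertex r m k (S : {set V}) v : v \notin ranked e r m k.+1 ->
  #|S| <= m -> v \notin S ->
  exists2 u, u \in ballS e S v r :\ v & u \notin ranked e r m k.
Proof.
rewrite /= in_setU negb_or inE => /andP [_ /existsPn /(_ S)].
by move=> + cS vS; rewrite cS vS /= => /subsetPn [u]; exists u.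
Qed.

End Balls.

Lemma path_rcons_rev (T : eqType) (e : rel T) a q b : symmetric e ->
  path e a (rcons q b) -> path e b (rcons (rev q) a).
Proof.
move=> e_sym; have := rev_path e a (rcons q b).
rewrite last_rcons belast_rcons rev_cons => ->.
by rewrite (@eq_path _ _ e) // => x y /=; rewrite e_sym.
Qed.

Definition parent_word (T : Type) (w : seq T) := take (size w).-1 w.

Lemma size_parent_word (T : Type) (w : seq T) : size (parent_word w) = (size w).-1.
Proof. by rewrite size_takel // leq_pred. Qed.

Lemma exists_child_outside (T : eqType) d (ws : seq (seq T)) w :
  [::] \in ws -> w \notin ws -> size w <= d ->
  exists w', [/\ w' \notin ws, size w' <= d, w' != [::] & parent_word w' \in ws].
Proof.
move=> root; have [n] := ubnP (size w); elim: n w => // n IH w sw wn wd.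
have w_nil : w != [::] by apply: contraNneq wn => ->.
case pw: (parent_word w \in ws); first by exists w.
apply: (IH (parent_word w)); rewrite ?pw ?size_parent_word //.
- by move: sw w_nil; rewrite -size_eq0; case: (size w).
- exact: leq_trans (leq_pred _) wd.
Qed.

Section TreeWords.
Variables d m : nat.
Implicit Types x y : tree_vertex d m.

Definition word x : seq 'I_m := val (tagged x).

Lemma size_word x : size (word x) = tag x.
Proof. by rewrite size_tuple. Qed.

Lemma size_word_le x : size (word x) <= d.
Proof. by rewrite size_word -ltnS ltn_ord. Qed.

Lemma word_inj : injective word.
Proof.
case=> k1 t1 [k2 t2] /= E.
have Ek : k1 = k2.
  by apply: val_inj; rewrite /= -(size_tuple t1) -(size_tuple t2) (congr1 size E).
by subst k2; congr existT; apply: val_inj.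
Qed.

Lemma mem_codom_word (w : seq 'I_m) : size w <= d -> w \in codom word.
Proof.
rewrite -ltnS => wd; apply/codomP.
by exists (existT (fun k : 'I_d.+1 => k.-tuple 'I_m) (Ordinal wd) (in_tuple w)).
Qed.

Lemma codom_word_uniq : uniq (codom word).
Proof. by rewrite map_inj_uniq ?enum_uniq //; apply: word_inj. Qed.

Lemma tree_parent_word x y : tree_parent x y ->
  word x = parent_word (word y) /\ word y != [::].
Proof.
case/andP => /eqP yx /eqP xy.
by rewrite /parent_word -size_eq0 !size_word yx.
Qed.

Lemma tree_parent_uniq x x' y : tree_parent x y -> tree_parent x' y -> x = x'.
Proof.
move=> /tree_parent_word [xy _] /tree_parent_word [x'y _].
by apply: word_inj; rewrite xy x'y.
Qed.

Definition edge_child x y := if tree_parent x y then y else x.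

Lemma edge_child_inj x y x' y' : tree_edge x y -> tree_edge x' y' ->
  edge_child x y = edge_child x' y' ->
  ((x == x') && (y == y')) || ((x == y') && (y == x')).
Proof.
rewrite /edge_child /tree_edge.
case: ifP => xy /= yx; case: ifP => x'y' /= y'x' E; subst.
- by rewrite (tree_parent_uniq xy x'y') !eqxx.
- by rewrite (tree_parent_uniq xy y'x') !eqxx orbT.
- by rewrite (tree_parent_uniq yx x'y') !eqxx orbT.
- by rewrite (tree_parent_uniq yx y'x') !eqxx.
Qed.

End TreeWords.

Section GreedyEmbedding.
Variables (V : finType) (e : rel V) (d r m m' : nat).
Hypothesis budget_large : r.+1 * #|{: tree_vertex d m}| <= m'.
Implicit Types (ws : seq (seq 'I_m)) (phi : seq 'I_m -> V) (Q : seq 'I_m -> seq V).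

Definition used_vertices phi Q ws := flatten [seq phi w :: Q w | w <- ws].

Record partial_embedding ws phi Q : Prop := {
  pe_uniq : uniq ws;
  pe_root : [::] \in ws;
  pe_size : {in ws, forall w, size w <= d};
  pe_parent : {in ws, forall w, w != [::] -> parent_word w \in ws};
  pe_path : {in ws, forall w, w != [::] ->
    path e (phi (parent_word w)) (rcons (Q w) (phi w))};
  pe_path_size : {in ws, forall w, size (Q w) <= r};
  pe_rank : {in ws, forall w, phi w \notin ranked e r m' (d - size w)};
  pe_used_uniq : uniq (used_vertices phi Q ws) }.

Section Invariants.
Variables (ws : seq (seq 'I_m)) (phi : seq 'I_m -> V) (Q : seq 'I_m -> seq V).
Hypothesis pe : partial_embedding ws phi Q.

Lemma pe_size_ws : size ws <= #|{: tree_vertex d m}|.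
Proof.
rewrite -(size_codom (@word d m)); apply: uniq_leq_size (pe_uniq pe) _.
by move=> w /(pe_size pe) /mem_codom_word.
Qed.

Lemma pe_card_used : #|[set x in used_vertices phi Q ws]| <= m'.
Proof.
have used_size : size (used_vertices phi Q ws) <= r.+1 * size ws.
  by apply: size_flatten_map_le => w /(pe_path_size pe).
rewrite cardsE (leq_trans (card_size _)) // (leq_trans used_size) //.
by rewrite (leq_trans _ budget_large) // leq_mul2l pe_size_ws orbT.
Qed.

Lemma pe_branch_uniq w : w \in ws -> uniq (phi w :: Q w).
Proof. exact: flatten_map_uniq (pe_used_uniq pe). Qed.

Lemma pe_disjoint w w' z : w \in ws -> w' \in ws -> w != w' ->
  z \in phi w :: Q w -> z \notin phi w' :: Q w'.
Proof. exact: flatten_map_disjoint (pe_used_uniq pe). Qed.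

Lemma pe_path_uniq w : w \in ws -> uniq (Q w).
Proof. by case/pe_branch_uniq/andP. Qed.

Lemma pe_branch_inj : {in ws &, injective phi}.
Proof.
move=> w w' ww ww' E; apply/eqP/negPn/negP => ne.
by have := pe_disjoint ww ww' ne (mem_head _ _); rewrite E mem_head.
Qed.

Lemma pe_path_avoids_branch w w' z : w \in ws -> w' \in ws -> z \in Q w ->
  z != phi w'.
Proof.
move=> ww ww' zQ; case: (eqVneq w w') => [<- | ne].
  by apply: contraTneq zQ => ->; case/pe_branch_uniq/andP: ww.
have := pe_disjoint (z := z) ww ww' ne; rewrite inE zQ orbT => /(_ isT).
by rewrite inE negb_or => /andP [].
Qed.

Lemma pe_paths_disjoint w w' z : w \in ws -> w' \in ws -> w != w' ->
  z \in Q w -> z \notin Q w'.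
Proof.
move=> ww ww' ne zQ; have := pe_disjoint (z := z) ww ww' ne.
by rewrite inE zQ orbT => /(_ isT); rewrite inE negb_or => /andP [].
Qed.

End Invariants.

Lemma pe_add_leaf ws phi Q w u q : partial_embedding ws phi Q ->
  w \notin ws -> size w <= d -> parent_word w \in ws ->
  path e (phi (parent_word w)) (rcons q u) -> size q <= r -> uniq (u :: q) ->
  u \notin ranked e r m' (d - size w) ->
  {in u :: q, forall x, x \notin used_vertices phi Q ws} ->
  partial_embedding (w :: ws) [eta phi with w |-> u] [eta Q with w |-> q].
Proof.
move=> pe wn wd pw ep qr uq ur fresh.
have old x : x \in ws -> x == w = false by move=> xw; apply: contraNF wn => /eqP <-.
have used_eq : used_vertices [eta phi with w |-> u] [eta Q with w |-> q] ws
             = used_vertices phi Q ws.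
  by congr flatten; apply/eq_in_map => x /old /= ->.
split.
- by rewrite /= wn (pe_uniq pe).
- by rewrite inE (pe_root pe) orbT.
- by move=> x /predU1P [-> // | /(pe_size pe)].
- by move=> x /predU1P [-> _ | xw /(pe_parent pe xw) px]; rewrite inE ?pw ?px orbT.
- move=> x /predU1P [-> _ | xw x_nil]; first by rewrite /= eqxx (old _ pw).
  by rewrite /= !old ?(pe_path pe) ?(pe_parent pe).
- by move=> x /predU1P [-> | xw]; rewrite /= ?eqxx ?old ?(pe_path_size pe).
- by move=> x /predU1P [-> | xw]; rewrite /= ?eqxx ?old ?(pe_rank pe).
- have -> : used_vertices [eta phi with w |-> u] [eta Q with w |-> q] (w :: ws)
          = (u :: q) ++ used_vertices phi Q ws.
    by rewrite -used_eq /used_vertices /= eqxx.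
  rewrite cat_uniq uq (pe_used_uniq pe) andbT.
  by apply/hasPn => x; apply: contraL; apply: fresh.
Qed.

Lemma pe_root_only v0 : v0 \notin ranked e r m' d ->
  partial_embedding [:: [::]] (fun=> v0) (fun=> [::]).
Proof.
by move=> v0_unranked; split => // w; rewrite mem_seq1 => /eqP -> //; rewrite subn0.
Qed.

Lemma pe_extend ws phi Q : partial_embedding ws phi Q ->
  size ws < #|{: tree_vertex d m}| ->
  exists ws' phi' Q', partial_embedding ws' phi' Q' /\ size ws' = (size ws).+1.
Proof.
move=> pe ws_small.
have [x xn] : exists x : tree_vertex d m, word x \notin ws.
  apply/existsP; apply: contraTT ws_small => /existsPn all_in; rewrite -leqNgt.
  rewrite -(size_codom (@word d m)) uniq_leq_size ?codom_word_uniq //.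
  by move=> _ /codomP [y ->]; move/negbNE: (all_in y).
have [w [wn wd w_nil pw]] := exists_child_outside (pe_root pe) xn (size_word_le x).
set v := phi (parent_word w).
have v_unranked : v \notin ranked e r m' (d - size w).+1.
  have sw : 0 < size w by rewrite lt0n size_eq0.
  have -> : (d - size w).+1 = d - size (parent_word w) by rewrite size_parent_word; lia.
  exact: pe_rank pe _ pw.
pose S := [set x in used_vertices phi Q ws] :\ v.
have cardS : #|S| <= m' := leq_trans (subset_leq_card (subsetDl _ _)) (pe_card_used pe).
have [u] := unranked_ball_vertex v_unranked cardS (negbT (setD11 _ _)).
rewrite in_setD1 => /andP [uv /ballS_path /(_ uv) [q [ep qr uq qS]]] ur.
exists (w :: ws), [eta phi with w |-> u], [eta Q with w |-> q]; split => //.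
have v_notin : v \notin rcons q u by case/andP: uq.
apply: pe_add_leaf => //; first exact: ltnW.
  by move: uq; rewrite cons_uniq rcons_uniq => /andP [].
move=> y; rewrite -mem_rcons => yq; move: (qS y yq).
by rewrite in_setD1 inE negb_and negbK => /predU1P [yv | //]; rewrite -yv yq in v_notin.
Qed.

Lemma pe_complete v0 : v0 \notin ranked e r m' d ->
  exists ws phi Q, partial_embedding ws phi Q /\ forall x : tree_vertex d m, word x \in ws.
Proof.
move=> v0_unranked.
have grow n : n <= #|{: tree_vertex d m}| ->
    exists ws phi Q, partial_embedding ws phi Q /\ n <= size ws.
  elim: n => [_ | n IH n_small].
    by exists [:: [::]], (fun=> v0), (fun=> [::]); split; first exact: pe_root_only.
  have [ws [phi [Q [pe n_ws]]]] := IH (ltnW n_small).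
  case: (ltnP n (size ws)) => [| ws_n]; first by exists ws, phi, Q.
  have [ws' [phi' [Q' [pe' ws'_size]]]] := pe_extend pe (leq_ltn_trans ws_n n_small).
  by exists ws', phi', Q'; rewrite ws'_size ltnS.
have [ws [phi [Q [pe full]]]] := grow _ (leqnn _).
exists ws, phi, Q; split => // x.
have ws_words : {subset ws <= codom (@word d m)}.
  by move=> w /(pe_size pe) /mem_codom_word.
have [_ ws_eq] : (size ws = size (codom (@word d m))) * (ws =i codom (@word d m)).
  by apply: uniq_min_size (pe_uniq pe) ws_words _; rewrite size_codom.
by rewrite ws_eq codom_f.
Qed.

Definition edge_path Q (x y : tree_vertex d m) :=
  if tree_parent x y then Q (word y) else rev (Q (word x)).

Lemma mem_edge_path Q x y z :
  (z \in edge_path Q x y) = (z \in Q (word (edge_child x y))).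
Proof. by rewrite /edge_path /edge_child; case: ifP; rewrite ?mem_rev. Qed.

Lemma pe_topminor ws phi Q : symmetric e -> partial_embedding ws phi Q ->
  (forall x : tree_vertex d m, word x \in ws) ->
  shallow_topminor (@tree_edge d m) e r.
Proof.
move=> e_sym pe full; exists (phi \o @word d m), (edge_path Q); split.
- by move=> x y /= /(pe_branch_inj pe (full x) (full y)) /word_inj.
- move=> x y; rewrite /tree_edge /edge_path /=; case: ifP => [xy _ | _ yx].
    have [-> y_nil] := tree_parent_word xy.
    split; rewrite ?(pe_path pe) ?(pe_path_size pe) ?(pe_path_uniq pe) //.
    by move=> z u /(pe_path_avoids_branch pe (full y) (full u)).
  have [xw x_nil] := tree_parent_word yx.
  split; rewrite ?size_rev ?rev_uniq ?(pe_path_size pe) ?(pe_path_uniq pe) //.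
  + by apply: path_rcons_rev => //; rewrite xw (pe_path pe).
  + by move=> z u; rewrite mem_rev => /(pe_path_avoids_branch pe (full x) (full u)).
- move=> x y x' y' xy x'y' ne z; rewrite !mem_edge_path.
  apply: (pe_paths_disjoint pe); rewrite ?full // (inj_eq (@word_inj d m)).
  by apply: contraNneq ne => /(edge_child_inj xy x'y').
Qed.

End GreedyEmbedding.

Theorem lemma3p5 (d r : nat) :
  forall m : nat, exists m' : nat,
    forall (V : finType) (e : rel V),
      symmetric e -> irreflexive e ->
      rank_gt e r m' d ->
      shallow_topminor (@tree_edge d m) e r.
Proof.
move=> m; exists (r.+1 * #|{: tree_vertex d m}|) => V e e_sym _ [v0 v0_unranked].
have [ws [phi [Q [pe full]]]] := pe_complete (leqnn _) v0_unranked.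
exact: pe_topminor e_sym pe full.
Qed.
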